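(* Let $L,R\in\mathrm{SL}_2(\mathbb{N}_0)$ be such that $(L,R)$ is a left-right pair. Then every tree (connected component) of the graph $\mathcal{F}(L,R)$ is rooted, i.e. it contains a vertex of indegree $0$. Equivalently, no vertex $z\in\mathcal{D}_0$ has infinitely many ancestors in $\mathcal{F}(L,R)$.
   Context: $\mathbb{N}_0=\{0,1,2,\dots\}$ and $\mathrm{SL}_2(\mathbb{N}_0)$ is the set of $2\times 2$ matrices $\begin{pmatrix} a & b\\ c & d\end{pmatrix}$ with $a,b,c,d\in\mathbb{N}_0$ and $ad-bc=1$; such a matrix $T$ acts on $\overline{\mathbb{C}}=\mathbb{C}\cup\{\infty\}$ by $T(z)=\frac{az+b}{cz+d}$. Let $\mathcal{D}_0=\{x+iy : x>0,\ y>0\}$; every $T\in\mathrm{SL}_2(\mathbb{N}_0)$ satisfies $T(\mathcal{D}_0)\subseteq\mathcal{D}_0$. A pair $(L,R)$ in $\mathrm{SL}_2(\mathbb{N}_0)$ is a left-right pair if $L(\mathcal{D}_0)\cap R(\mathcal{D}_0)=\emptyset$. The directed graph $\mathcal{F}(L,R)$ has vertex set $\mathcal{D}_0$ and edge set $\{(z,L(z)) : z\in\mathcal{D}_0\}\cup\{(z,R(z)) : z\in\mathcal{D}_0\}$. When $(L,R)$ is a left-right pair, it is known that $\mathcal{F}(L,R)$ is a disjoint union of infinite binary trees, each of which is either rooted (every vertex has outdegree 2, exactly one vertex has indegree 0 and all others have indegree 1) or rootless (every vertex has outdegree 2 and indegree 1). A vertex $w$ is an ancestor of $z$ if there is a directed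 path from $w$ to $z$ in $\mathcal{F}(L,R)$. *)

(* complex numbers x + i y are represented as pairs (x, y) of reals. *)
From Stdlib Require Import Reals Relations List.
Open Scope R_scope.

Record SL2N0 := mkSL2 {
  ma : nat; mb : nat; mc : nat; md : nat;
  mdet : (ma * md = mb * mc + 1)%nat }.

Definition D0 (z : R * R) : Prop := 0 < fst z /\ 0 < snd z.

(* Moebius action T(z) = (a z + b) / (c z + d), written out in real and
   imaginary parts: for z = x + i y,
   (a z + b)/(c z + d) = ((a x + b)(c x + d) + a c y^2 + i (ad-bc) y) / |c z + d|^2 *)
Definition act (T : SL2N0) (z : R * R) : R * R :=
  let a := INR (ma T) in let b := INR (mb T) in
  let c := INR (mc T) in let d := INR (md T) in
  let x := fst z in let y := snd z in
  let den := (c * x + d) ^ 2 + (c * y) ^ 2 in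
  (((a * x + b) * (c * x + d) + a * c * y ^ 2) / den,
   ((a * d - b * c) * y) / den).

Definition left_right_pair (L Rm : SL2N0) : Prop :=
  forall z w, D0 z -> D0 w -> act L z <> act Rm w.

Definition edge (L Rm : SL2N0) (u v : R * R) : Prop :=
  D0 u /\ (v = act L u \/ v = act Rm u).

Definition ancestor (L Rm : SL2N0) (w z : R * R) : Prop :=
  clos_refl_trans (R * R) (edge L Rm) w z.

Definition indeg0 (L Rm : SL2N0) (w : R * R) : Prop :=
  ~ exists u, edge L Rm u w.

From Stdlib Require Import Reals Relations List Lia Lra Psatz Classical.
From Coquelicot Require Import Coquelicot.
Open Scope R_scope.

(* If z = M w with w in D_0 and M = [[a,b],[c,d]] in SL_2(N_0), then
   Im z <= 1/(2cd) and b <= d Re z; together with ad = bc + 1 this bounds all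
   entries of M in terms of z.  An ancestor w of z satisfies z = M w for a
   product M of copies of L and R, and w = M^{-1} z, so z has finitely many
   ancestors.  Neither L nor R is the identity (L(D_0) and R(D_0) are
   disjoint), so every step backwards strictly increases the entry sum of M;
   this sum being bounded, walking backwards from z ends at a root. *)

Definition mobius (a b c d : R) (w : C) : C := ((a * w + b) / (c * w + d))%C.

Lemma INR_det (T : SL2N0) : INR (ma T) * INR (md T) = INR (mb T) * INR (mc T) + 1.
Proof. rewrite <- !mult_INR, <- S_INR, mdet; f_equal; lia. Qed.

Lemma ma_md_pos (T : SL2N0) : (1 <= ma T)%nat /\ (1 <= md T)%nat.
Proof. pose proof (mdet T); destruct (ma T), (md T); lia. Qed.

Lemma act_den_pos (T : SL2N0) (w : R * R) :
  D0 w -> 0 < INR (mc T) * fst w + INR (md T).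
Proof.
  intros [Hx _]; destruct (ma_md_pos T) as [_ Hd].
  apply (le_INR 1) in Hd; pose proof (pos_INR (mc T)); simpl in Hd; nra.
Qed.

Lemma act_mobius (T : SL2N0) (w : R * R) :
  D0 w -> act T w = mobius (INR (ma T)) (INR (mb T)) (INR (mc T)) (INR (md T)) w.
Proof.
  intros Hw; pose proof (act_den_pos T w Hw); pose proof (INR_det T).
  destruct w as [x y]; destruct Hw as [_ Hy]; simpl in *.
  unfold act, mobius, Cdiv, Cmult, Cplus, Cinv, RtoC; simpl.
  f_equal; field; nra.
Qed.

Lemma mobius_den_neq0 (T : SL2N0) (w : R * R) :
  D0 w -> (INR (mc T) * w + INR (md T))%C <> 0%C.
Proof.
  intros Hw E; pose proof (act_den_pos T w Hw).
  apply (f_equal fst) in E; destruct w; simpl in *; lra.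
Qed.

Lemma act_D0 (T : SL2N0) (w : R * R) : D0 w -> D0 (act T w).
Proof.
  intros Hw; pose proof (act_den_pos T w Hw); pose proof (INR_det T).
  destruct (ma_md_pos T) as [Ha _]; apply (le_INR 1) in Ha.
  pose proof (pos_INR (mb T)); pose proof (pos_INR (mc T)).
  destruct w as [x y]; destruct Hw as [Hx Hy]; unfold D0, act; simpl in *.
  assert (0 < (INR (mc T) * x + INR (md T)) ^ 2 + (INR (mc T) * y) ^ 2) by nra.
  assert (0 <= INR (ma T) * INR (mc T) * y ^ 2)
    by (apply Rmult_le_pos; [apply Rmult_le_pos | apply pow2_ge_0]; lra).
  assert (0 < INR (ma T) * x + INR (mb T)) by nra.
  split; apply Rdiv_lt_0_compat; try lra.
  - assert (0 < (INR (ma T) * x + INR (mb T)) * (INR (mc T) * x + INR (md T)))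
      by (apply Rmult_lt_0_compat; lra).
    lra.
  - replace (INR (ma T) * INR (md T) - INR (mb T) * INR (mc T)) with 1 by lra; lra.
Qed.

Lemma det_mul_nat (a b c d p q r s : nat) :
  (a * d = b * c + 1)%nat -> (p * s = q * r + 1)%nat ->
  ((a * p + b * r) * (c * q + d * s) = (a * q + b * s) * (c * p + d * r) + 1)%nat.
Proof.
  intros H1 H2.
  replace ((a * p + b * r) * (c * q + d * s))%nat
    with ((a * d) * (p * s) + b * c * q * r + a * p * c * q + b * r * d * s)%nat by ring.
  replace ((a * q + b * s) * (c * p + d * r))%nat
    with ((a * d) * (q * r) + b * c * (p * s) + a * p * c * q + b * r * d * s)%nat by ring.
  rewrite H1, H2; ring.
Qed.

Definition mulSL2 (M T : SL2N0) : SL2N0 :=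
  mkSL2 _ _ _ _ (det_mul_nat _ _ _ _ _ _ _ _ (mdet M) (mdet T)).

Lemma act_mulSL2 (M T : SL2N0) (w : R * R) :
  D0 w -> act (mulSL2 M T) w = act M (act T w).
Proof.
  intros Hw.
  rewrite (act_mobius M) by (apply act_D0; exact Hw).
  rewrite !act_mobius by exact Hw.
  pose proof (mobius_den_neq0 T w Hw) as HT.
  pose proof (mobius_den_neq0 (mulSL2 M T) w Hw) as HMT.
  unfold mobius in *; simpl in *; rewrite !plus_INR, !mult_INR, !RtoC_plus, !RtoC_mult in *.
  match goal with |- ?l = ?r => change (@eq C l r) end.
  field; split; [exact HT|].
  intros E; apply HMT; rewrite <- E; ring.
Qed.

Lemma act_inverse (M : SL2N0) (w : C) :
  D0 w -> w = mobius (INR (md M)) (- INR (mb M)) (- INR (mc M)) (INR (ma M)) (act M w).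
Proof.
  intros Hw; rewrite act_mobius by exact Hw.
  pose proof (mobius_den_neq0 M w Hw) as Hu.
  assert (Hdet : (RtoC (INR (ma M)) * INR (md M) = RtoC (INR (mb M)) * INR (mc M) + 1)%C)
    by (rewrite <- !RtoC_mult, <- RtoC_plus, INR_det; reflexivity).
  unfold mobius; rewrite !RtoC_opp.
  match goal with |- ?l = ?r => change (@eq C l r) end.
  field; split; [exact Hu|].
  replace (- INR (mc M) * (INR (ma M) * w + INR (mb M)) + INR (ma M) * (INR (mc M) * w + INR (md M)))%C
    with (RtoC (INR (ma M)) * INR (md M) - RtoC (INR (mb M)) * INR (mc M))%C by ring.
  rewrite Hdet; replace (INR (mb M) * INR (mc M) + 1 - INR (mb M) * INR (mc M))%C with (RtoC 1) by ring.
  exact C1_nz.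
Qed.

Definition is_identity (T : SL2N0) : Prop :=
  ma T = 1%nat /\ mb T = 0%nat /\ mc T = 0%nat /\ md T = 1%nat.

Lemma act_identity (T : SL2N0) (w : R * R) : is_identity T -> act T w = w.
Proof.
  intros (Ha & Hb & Hc & Hd); unfold act; rewrite Ha, Hb, Hc, Hd.
  destruct w; simpl; f_equal; field.
Qed.

Definition idSL2 : SL2N0 := mkSL2 1 0 0 1 eq_refl.

Lemma is_identity_idSL2 : is_identity idSL2.
Proof. repeat split. Qed.

Lemma act_im_bound (M : SL2N0) (w : R * R) :
  D0 w -> 2 * INR (mc M) * INR (md M) * snd (act M w) <= 1.
Proof.
  intros Hw; pose proof (act_den_pos M w Hw); pose proof (INR_det M).
  pose proof (pos_INR (mc M)); pose proof (pos_INR (md M)).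
  destruct w as [x y]; destruct Hw as [Hx Hy]; unfold act; cbn [fst snd] in *.
  set (c := INR (mc M)) in *; set (d := INR (md M)) in *.
  assert (Hden : 2 * c * d * y <= (c * x + d) ^ 2 + (c * y) ^ 2).
  { assert (0 <= c * x) by nra; assert (d * d <= (c * x + d) ^ 2) by nra.
    pose proof (pow2_ge_0 (d - c * y)); nra. }
  replace (INR (ma M) * d - INR (mb M) * c) with 1 by lra.
  set (den := (c * x + d) ^ 2 + (c * y) ^ 2) in *.
  assert (0 < den) by (unfold den; nra).
  apply (Rmult_le_reg_r den); [lra|].
  replace (2 * c * d * (1 * y / den) * den) with (2 * c * d * y) by (field; lra); lra.
Qed.

Lemma act_re_bound (M : SL2N0) (w : R * R) :
  D0 w -> INR (mb M) <= INR (md M) * fst (act M w).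
Proof.
  intros Hw; pose proof (act_den_pos M w Hw); pose proof (INR_det M).
  pose proof (pos_INR (mc M)).
  destruct w as [x y]; destruct Hw as [Hx Hy]; unfold act; cbn [fst snd] in *.
  set (a := INR (ma M)) in *; set (b := INR (mb M)) in *;
  set (c := INR (mc M)) in *; set (d := INR (md M)) in *.
  assert (Hden : 0 < (c * x + d) ^ 2 + (c * y) ^ 2) by nra.
  assert (Hnum : d * ((a * x + b) * (c * x + d) + a * c * y ^ 2)
                 - b * ((c * x + d) ^ 2 + (c * y) ^ 2)
                 = (c * x + d) * x + c * y ^ 2)
    by (transitivity (((c * x + d) * x + c * y ^ 2) * (a * d - b * c)); [ring | rewrite H0; ring]).
  assert (0 <= (c * x + d) * x + c * y ^ 2)
    by (pose proof (pow2_ge_0 y); nra).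
  set (den := (c * x + d) ^ 2 + (c * y) ^ 2) in *.
  apply (Rmult_le_reg_r den); [lra|].
  replace (d * (((a * x + b) * (c * x + d) + a * c * y ^ 2) / den) * den)
    with (d * ((a * x + b) * (c * x + d) + a * c * y ^ 2)) by (field; lra); lra.
Qed.

Definition entries_le (B : nat) (M : SL2N0) : Prop :=
  (ma M <= B /\ mb M <= B /\ mc M <= B /\ md M <= B)%nat.

Lemma entries_le_of_act (N : nat) (M : SL2N0) (w : R * R) :
  D0 w -> (1 <= N)%nat -> fst (act M w) <= INR N -> 1 <= INR N * snd (act M w) ->
  entries_le (N * N * N + 1) M.
Proof.
  intros Hw HN HX HY.
  pose proof (act_im_bound M w Hw) as Him; pose proof (act_re_bound M w Hw) as Hre.
  destruct (act_D0 M w Hw) as [Hre_pos Him_pos].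
  pose proof (mdet M) as Hdet; destruct (ma_md_pos M) as [Ha Hd].
  assert (Hcd : (mc M * md M <= N)%nat).
  { apply INR_le; rewrite mult_INR.
    assert (0 <= INR (mc M) * INR (md M)) by (apply Rmult_le_pos; apply pos_INR).
    nra. }
  assert (HdN : (md M <= N)%nat)
    by (destruct (Nat.eq_dec (mc M) 0) as [E|E]; [rewrite E in Hdet|]; nia).
  assert (HbN : (mb M <= N * N)%nat).
  { apply INR_le; rewrite mult_INR; apply le_INR in HdN.
    pose proof (pos_INR (md M)); pose proof (pos_INR (mb M)).
    apply (Rle_trans _ _ _ Hre); apply Rmult_le_compat; lra. }
  unfold entries_le; nia.
Qed.

Lemma act_preimage_entries_bounded (z : R * R) :
  D0 z -> exists B, forall M w, D0 w -> z = act M w -> entries_le B M.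
Proof.
  intros [Hx Hy].
  destruct (INR_archimed 1 (fst z + / snd z + 1)) as [N HN]; [lra|].
  assert (Hinv : / snd z * snd z = 1) by (field; lra).
  assert (0 < / snd z) by (apply Rinv_0_lt_compat; exact Hy).
  assert (HN1 : (1 <= N)%nat) by (destruct N; [simpl in HN; lra | lia]).
  exists (N * N * N + 1)%nat; intros M w Hw ->.
  apply entries_le_of_act with w; [exact Hw | exact HN1 | lra | nra].
Qed.

Lemma left_right_pair_not_identity (L Rm : SL2N0) :
  left_right_pair L Rm -> ~ is_identity L /\ ~ is_identity Rm.
Proof.
  intros Hlr; assert (H11 : D0 (1, 1)) by (split; simpl; lra).
  split; intros Hid.
  - apply (Hlr (act Rm (1, 1)) (1, 1)); [apply act_D0 | | apply act_identity]; assumption.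
  - apply (Hlr (1, 1) (act L (1, 1))); [| apply act_D0 |]; try assumption.
    symmetry; apply act_identity; assumption.
Qed.

Definition msum (M : SL2N0) : nat := (ma M + mb M + mc M + md M)%nat.

Lemma msum_mulSL2_gt (M T : SL2N0) : ~ is_identity T -> (msum M < msum (mulSL2 M T))%nat.
Proof.
  intros HT; unfold is_identity, msum, mulSL2 in *; simpl.
  pose proof (ma_md_pos M); pose proof (ma_md_pos T); pose proof (mdet T).
  assert (ma T >= 2 \/ mb T >= 1 \/ mc T >= 1 \/ md T >= 2)%nat as [|[|[|]]] by lia; nia.
Qed.

Lemma ancestor_act (L Rm : SL2N0) (w z : R * R) :
  ancestor L Rm w z -> D0 z -> D0 w /\ exists M, z = act M w.
Proof.
  intros Hanc Hz; apply clos_rt_rt1n in Hanc.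
  induction Hanc as [w | w y z' [Hw Hy] _ IH].
  - split; [exact Hz|]; exists idSL2; symmetry; apply act_identity, is_identity_idSL2.
  - destruct (IH Hz) as [_ [M ->]]; split; [exact Hw|].
    destruct Hy as [-> | ->]; [exists (mulSL2 M L) | exists (mulSL2 M Rm)];
      symmetry; apply act_mulSL2, Hw.
Qed.

Section Ancestors.

Variables (L Rm : SL2N0) (z : R * R) (B : nat).
Hypothesis Hlr : left_right_pair L Rm.
Hypothesis Hz : D0 z.
Hypothesis Hbound : forall M w, D0 w -> z = act M w -> entries_le B M.

Lemma ancestor_has_root (M : SL2N0) (w : R * R) :
  D0 w -> ancestor L Rm w z -> z = act M w ->
  exists r, D0 r /\ indeg0 L Rm r /\ ancestor L Rm r z.
Proof.
  revert w; induction M as [M IH]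
    using (Wf_nat.induction_ltof1 _ (fun M => 4 * B - msum M)%nat).
  intros w Hw Hanc Hzw.
  destruct (classic (exists u, edge L Rm u w)) as [[u [Hu Huw]] | Hroot];
    [| now exists w].
  destruct (left_right_pair_not_identity L Rm Hlr) as [HL HR].
  assert (HT : exists T, ~ is_identity T /\ w = act T u)
    by (destruct Huw; eauto).
  destruct HT as [T [HT ->]].
  assert (HzMT : z = act (mulSL2 M T) u) by (rewrite act_mulSL2; assumption).
  apply (IH (mulSL2 M T)) with u; try assumption.
  - pose proof (Hbound _ _ Hu HzMT); pose proof (msum_mulSL2_gt M T HT).
    unfold Wf_nat.ltof, entries_le, msum in *; lia.
  - apply rt_trans with (act T u); [apply rt_step; split; auto|exact Hanc].
Qed.

Lemma ancestors_finite :
  exists l : list (R * R), forall w, ancestor L Rm w z -> In w l.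
Proof.
  set (s := seq 0 (S B)).
  exists (map (fun '(a, b, c, d) => mobius (INR d) (- INR b) (- INR c) (INR a) z)
             (list_prod (list_prod (list_prod s s) s) s)).
  intros w Hanc; destruct (ancestor_act L Rm w z Hanc Hz) as [Hw [M ->]].
  destruct (Hbound M w Hw eq_refl) as (Ha & Hb & Hc & Hd).
  apply in_map_iff; exists (ma M, mb M, mc M, md M); split.
  - symmetry; apply act_inverse, Hw.
  - repeat apply in_prod; apply in_seq; lia.
Qed.

End Ancestors.

Theorem theorem1p2 (L Rm : SL2N0) :
  left_right_pair L Rm ->
  forall z : R * R, D0 z ->
    (exists w, D0 w /\ indeg0 L Rm w /\ ancestor L Rm w z) /\
    (exists l : list (R * R), forall w, ancestor L Rm w z -> In w l).
Proof.
  intros Hlr z Hz.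
  destruct (act_preimage_entries_bounded z Hz) as [B HB].
  split.
  - apply (ancestor_has_root L Rm z B Hlr HB idSL2 z Hz (rt_refl _ _ _)).
    symmetry; apply act_identity, is_identity_idSL2.
  - exact (ancestors_finite L Rm z B Hz HB).
Qed.
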